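(* Let $r\geq1$, $k\geq1$, $n\geq1$ be integers, $a<b$, $N=2kn$, $\bar h=(b-a)/N$, and let $f_0,\dots,f_{N-1}$ be the functions defined in the context for the partition $a_i=a+i\bar h$ of $[a,b]$ into $N$ subintervals. For $j=0,\dots,k-1$ define $\mathcal{X}_j:\{0,\dots,kn-1\}\to\{0,\dots,N-1\}$ by $\mathcal{X}_j(i)=n(k-j)+i-1$. Let $c_0,\dots,c_{k-1}$ be real numbers with $\sum_{j=0}^{k-1}c_j(\tfrac12+\tfrac{j}{2k}-x)^{k-1}=1$ for all $x\in\mathbb{R}$. Let $\lambda_0,\dots,\lambda_{kn-1}\in\mathbb{R}$ and set $$I_j=\int_a^b\int_a^{y_{k-1}}\cdots\int_a^{y_1}\sum_{i=0}^{kn-1}\lambda_i f_{\mathcal{X}_j(i)}(y_0)\,dy_0\cdots dy_{k-1}.$$ Then $$\sum_{j=0}^{k-1}c_jI_j=\bar h^{\,r+1}(b-a)^{k-1}\frac{1}{(k-1)!}\varphi_r^1\sum_{i=0}^{kn-1}\lambda_i=(kn)^{-r}(b-a)^{k+r}2^{-r-1}\frac{\varphi_r^1}{(k-1)!}\cdot\frac{1}{kn}\sum_{i=0}^{kn-1}\lambda_i.$$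
   Context: $U_s$ is the Chebyshev polynomial of the second kind of degree $s$; $(x-t)_+^{s}=(x-t)^{s}$ for $x\geq t$ and $0$ otherwise. $\psi_{r+1}(x)=\frac{1}{r!}\int_{-1}^1(x-t)_+^{r}\,\mathrm{sgn}\,U_{r+1}(t)\,dt$. For a constant $\alpha$ and interval $[c,d]$, $\varphi_r([c,d],x)=\alpha\left(\frac{d-c}{2}\right)^r\psi_{r+1}\!\left(\frac{2x-d-c}{d-c}\right)$ for $x\in[c,d]$. $\varphi_r^1=\left(\tfrac12\right)^{r+1}\frac{\alpha}{(r+1)!}\int_{-1}^1(1-t)^{r+1}\,\mathrm{sgn}\,U_{r+1}(t)\,dt$. For $i=0,\dots,N-1$, $f_i(x)=\varphi_r([a_i,a_{i+1}],x)$ for $x\in[a_i,a_{i+1}]$ and $f_i(x)=0$ otherwise. *)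

From Stdlib Require Import Reals Lra.
From Coquelicot Require Import Coquelicot.
Open Scope R_scope.

Fixpoint sumR (m : nat) (F : nat -> R) : R :=
  match m with
  | O => 0
  | S m' => sumR m' F + F m'
  end.

Fixpoint chebU (s : nat) (x : R) : R :=
  match s with
  | O => 1
  | S s' =>
    match s' with
    | O => 2 * x
    | S s'' => 2 * x * chebU s' x - chebU s'' x
    end
  end.

Definition sgnR (x : R) : R :=
  if Rlt_dec 0 x then 1 else if Rlt_dec x 0 then -1 else 0.

Definition tpow (x t : R) (s : nat) : R :=
  if Rle_dec t x then (x - t) ^ s else 0.

(* psi_{r+1}(x) = 1/r! int_{-1}^1 (x-t)_+^r sgn U_{r+1}(t) dt *)
Definition psi (r : nat) (x : R) : R :=
  / INR (Factorial.fact r) * RInt (fun t => tpow x t r * sgnR (chebU (r + 1) t)) (-1) 1.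

Definition phi (alpha : R) (r : nat) (c d x : R) : R :=
  alpha * ((d - c) / 2) ^ r * psi r ((2 * x - d - c) / (d - c)).

Definition phi1 (alpha : R) (r : nat) : R :=
  (1 / 2) ^ (r + 1) * alpha / INR (Factorial.fact (r + 1)) *
  RInt (fun t => (1 - t) ^ (r + 1) * sgnR (chebU (r + 1) t)) (-1) 1.

Definition fpiece (alpha : R) (r : nat) (a b : R) (N i : nat) (x : R) : R :=
  let h := (b - a) / INR N in
  let ai := a + INR i * h in
  let ai1 := a + INR (i + 1) * h in
  if Rle_dec ai x then (if Rle_dec x ai1 then phi alpha r ai ai1 x else 0) else 0.

Definition Xmap (n k j i : nat) : nat := (n * (k - j) + i - 1)%nat.

Fixpoint iterInt (a : R) (m : nat) (g : R -> R) (y : R) : R :=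
  match m with
  | O => g y
  | S m' => RInt (fun t => iterInt a m' g t) a y
  end.

(* By Cauchy's formula, the [k]-fold iterated integral up to [b] of a function
   supported on a cell [[p, q]] is [int_p^q (b - t)^(k-1) / (k-1)! f(t) dt]. The
   cell functions are only piecewise continuous, so one integrates once to get a
   continuous primitive, applies Cauchy's formula to it, and integrates by parts.
   Rescaling the cell of [X_j(i)] to [[-1, 1]] turns [b - t] into
   [(b - a) (1/2 + j/(2k) - x)], where [x] depends only on [i] and the rescaled
   variable, so the hypothesis on the [c_j] collapses [sum_j c_j I_j] to
   [(b - a)^(k-1) / (k-1)!] times [int_{-1}^1 psi_{r+1}] per cell. By Fubini, that
   integral is [phi_r^1] up to scaling; both Fubini and the continuity of [psi_{r+1}]
   rest on [sgn U_{r+1}] being a step function, as [U_{r+1}] has finitely many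
   zeros [cos (k pi / (r + 2))]. *)

From Stdlib Require Import Reals Lra Lia.
From Coquelicot Require Import Coquelicot.
Open Scope R_scope.

(* Coquelicot's generic lemmas are stated with [mult], [plus], [scal], ... of an
   abstract structure and do not unify with [Rmult], [Rplus] on [R -> R]. *)

Lemma continuous_Rmult (f g : R -> R) x :
  continuous f x -> continuous g x -> continuous (fun y => f y * g y) x.
Proof. exact (continuous_mult f g x). Qed.

Lemma continuous_Rplus (f g : R -> R) x :
  continuous f x -> continuous g x -> continuous (fun y => f y + g y) x.
Proof. exact (continuous_plus f g x). Qed.

Lemma continuous_Rminus (f g : R -> R) x :
  continuous f x -> continuous g x -> continuous (fun y => f y - g y) x.
Proof. exact (continuous_minus f g x). Qed.

Lemma continuous_Rconst (c x : R) : continuous (fun _ : R => c) x.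
Proof. exact (continuous_const c x). Qed.

Lemma continuous_Rid (x : R) : continuous (fun y : R => y) x.
Proof. exact (continuous_id x). Qed.

Lemma continuous_Rpow (f : R -> R) m x :
  continuous f x -> continuous (fun y => f y ^ m) x.
Proof.
  intros Hf; induction m as [|m IH]; simpl.
  - apply continuous_Rconst.
  - now apply continuous_Rmult.
Qed.

Lemma continuous_Rdiv_const (f : R -> R) c x :
  continuous f x -> continuous (fun y => f y / c) x.
Proof. intros Hf. apply continuous_Rmult; [exact Hf | apply continuous_Rconst]. Qed.

Lemma continuous_Rabs_fun (f : R -> R) x :
  continuous f x -> continuous (fun y => Rabs (f y)) x.
Proof. exact (continuous_Rabs_comp f x). Qed.

Lemma continuous_Rcomp (f g : R -> R) x :
  continuous f x -> continuous g (f x) -> continuous (fun y => g (f y)) x.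
Proof. exact (continuous_comp f g x). Qed.

Lemma continuous_of_derive (f : R -> R) x df : is_derive f x df -> continuous f x.
Proof. intros H. apply (ex_derive_continuous (K := R_AbsRing) (V := R_NormedModule)). now exists df. Qed.

Create HintDb rcont.
#[local] Hint Resolve continuous_Rmult continuous_Rplus continuous_Rminus continuous_Rconst
  continuous_Rid continuous_Rpow continuous_Rdiv_const continuous_Rabs : rcont.
#[local] Hint Extern 1 (continuous (fun _ => Rabs _) _) => apply continuous_Rabs_fun : rcont.
Ltac rcont := auto 12 with rcont.

Lemma is_RInt_Rplus (f g : R -> R) a b If Ig :
  is_RInt f a b If -> is_RInt g a b Ig -> is_RInt (fun y => f y + g y) a b (If + Ig).
Proof. exact (is_RInt_plus f g a b If Ig). Qed.

Lemma is_RInt_Rminus (f g : R -> R) a b If Ig :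
  is_RInt f a b If -> is_RInt g a b Ig -> is_RInt (fun y => f y - g y) a b (If - Ig).
Proof. exact (is_RInt_minus f g a b If Ig). Qed.

Lemma is_RInt_Rscal (f : R -> R) a b k If :
  is_RInt f a b If -> is_RInt (fun y => k * f y) a b (k * If).
Proof. exact (is_RInt_scal f a b k If). Qed.

Lemma is_RInt_RChasles (f : R -> R) a b c l1 l2 :
  is_RInt f a b l1 -> is_RInt f b c l2 -> is_RInt f a c (l1 + l2).
Proof. exact (is_RInt_Chasles f a b c l1 l2). Qed.

Lemma is_RInt_Rzero a b : is_RInt (fun _ => 0) a b 0.
Proof. pose proof (is_RInt_const a b 0) as H. rewrite Rmult_0_r in H. exact H. Qed.

Lemma is_RInt_Rswap (f : R -> R) a b l : is_RInt f b a l -> is_RInt f a b (- l).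
Proof. exact (is_RInt_swap (V := R_NormedModule) f a b l). Qed.

Lemma is_RInt_Rcomp_lin (f : R -> R) u v a b l :
  is_RInt f (u * a + v) (u * b + v) l -> is_RInt (fun y => u * f (u * y + v)) a b l.
Proof. exact (is_RInt_comp_lin (V := R_NormedModule) f u v a b l). Qed.

Lemma is_RInt_Rext (f g : R -> R) a b l :
  (forall x, Rmin a b < x < Rmax a b -> f x = g x) -> is_RInt f a b l -> is_RInt g a b l.
Proof. exact (is_RInt_ext f g a b l). Qed.

Lemma is_RInt_of_derive (F f : R -> R) a b :
  (forall x, is_derive F x (f x)) -> (forall x, continuous f x) -> is_RInt f a b (F b - F a).
Proof. intros HF Hf. apply (is_RInt_derive F f a b); auto. Qed.

Lemma is_RInt_continuous (f : R -> R) a b :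
  (forall x, continuous f x) -> is_RInt f a b (RInt f a b).
Proof.
  intros Hf. apply (RInt_correct (V := R_CompleteNormedModule)).
  apply (ex_RInt_continuous (V := R_CompleteNormedModule)); auto.
Qed.

Lemma RInt_ext_R (f g : R -> R) a b : (forall x, f x = g x) -> RInt f a b = RInt g a b.
Proof. intros H. apply RInt_ext. auto. Qed.

Lemma is_derive_Rid (x : R) : is_derive (fun z : R => z) x 1.
Proof. exact (is_derive_id (K := R_AbsRing) x). Qed.

Lemma is_derive_Rconst (c x : R) : is_derive (fun _ : R => c) x 0.
Proof. exact (is_derive_const (K := R_AbsRing) (V := R_NormedModule) c x). Qed.

Lemma is_derive_Rmult (f g : R -> R) x df dg :
  is_derive f x df -> is_derive g x dg -> is_derive (fun z => f z * g z) x (df * g x + f x * dg).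
Proof. intros Hf Hg. exact (is_derive_mult (K := R_AbsRing) f g x df dg Hf Hg Rmult_comm). Qed.

Lemma is_derive_Rminus (f g : R -> R) x df dg :
  is_derive f x df -> is_derive g x dg -> is_derive (fun z => f z - g z) x (df - dg).
Proof. exact (is_derive_minus (K := R_AbsRing) f g x df dg). Qed.

Lemma is_derive_Rext (f g : R -> R) x l :
  (forall t, f t = g t) -> is_derive f x l -> is_derive g x l.
Proof. exact (is_derive_ext f g x l). Qed.

Lemma is_derive_RInt_continuous (f : R -> R) a y :
  (forall x, continuous f x) -> is_derive (fun z => RInt f a z) y (f y).
Proof.
  intros Hf. apply (is_derive_RInt (V := R_NormedModule) f (fun z => RInt f a z) a y); auto.
  apply filter_forall. intros z. now apply is_RInt_continuous.
Qed.

Lemma is_derive_pow_sub_antideriv b m x :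
  is_derive (fun t => - (b - t) ^ S m / INR (S m)) x ((b - x) ^ m).
Proof.
  apply (is_derive_Rext (fun t => - / INR (S m) * (b - t) ^ S m)).
  { intros t. unfold Rdiv. ring. }
  replace ((b - x) ^ m) with (- / INR (S m) * (INR (S m) * (0 - 1) * (b - x) ^ Nat.pred (S m))).
  2:{ simpl Nat.pred. field. apply not_0_INR. lia. }
  apply is_derive_scal, is_derive_pow, is_derive_Rminus.
  - apply is_derive_Rconst.
  - apply is_derive_Rid.
Qed.

Lemma is_RInt_one_sub_pow m c d :
  is_RInt (fun t => (1 - t) ^ m) c d (((1 - c) ^ S m - (1 - d) ^ S m) / INR (S m)).
Proof.
  replace (((1 - c) ^ S m - (1 - d) ^ S m) / INR (S m))
    with (- (1 - d) ^ S m / INR (S m) - - (1 - c) ^ S m / INR (S m)) by (unfold Rdiv; ring).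
  apply (is_RInt_of_derive (fun t => - (1 - t) ^ S m / INR (S m)));
    [intros; apply is_derive_pow_sub_antideriv | rcont].
Qed.

Definition trunc_pow (z : R) (m : nat) : R := if Rle_dec 0 z then z ^ m else 0.

Lemma tpow_trunc_pow x t m : tpow x t m = trunc_pow (x - t) m.
Proof. unfold tpow, trunc_pow. destruct (Rle_dec t x), (Rle_dec 0 (x - t)); auto; lra. Qed.

Lemma trunc_pow_nonpos z m : z <= 0 -> trunc_pow z (S m) = 0.
Proof. intros Hz. unfold trunc_pow. destruct (Rle_dec 0 z); auto. replace z with 0 by lra. simpl; ring. Qed.

Lemma trunc_pow_nonneg z m : 0 <= z -> trunc_pow z m = z ^ m.
Proof. intros Hz. unfold trunc_pow. destruct (Rle_dec 0 z); auto; lra. Qed.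

Lemma continuous_trunc_pow m z : (1 <= m)%nat -> continuous (fun y => trunc_pow y m) z.
Proof.
  intros Hm. apply (continuous_ext (fun y => ((y + Rabs y) / 2) ^ m)).
  - intros y. unfold trunc_pow. destruct (Rle_dec 0 y).
    + rewrite Rabs_right by lra. f_equal. lra.
    + rewrite Rabs_left by lra. replace ((y + - y) / 2) with 0 by lra.
      destruct m; [lia|]. simpl; ring.
  - rcont.
Qed.

Lemma is_RInt_pow m a b :
  is_RInt (fun z => z ^ m) a b ((b ^ S m - a ^ S m) / INR (S m)).
Proof.
  replace ((b ^ S m - a ^ S m) / INR (S m)) with (b ^ S m / INR (S m) - a ^ S m / INR (S m))
    by (unfold Rdiv; ring).
  apply (is_RInt_of_derive (fun z => z ^ S m / INR (S m))); [|rcont].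
  intros x. auto_derive; auto. destruct m; [simpl; field|].
  field. rewrite <- S_INR. apply not_0_INR. lia.
Qed.

Lemma is_RInt_trunc_pow_le m z0 z1 : z0 <= z1 ->
  is_RInt (fun z => trunc_pow z m) z0 z1 ((trunc_pow z1 (S m) - trunc_pow z0 (S m)) / INR (S m)).
Proof.
  intros Hz.
  assert (Hneg : forall c d, c <= d <= 0 -> is_RInt (fun z => trunc_pow z m) c d 0).
  { intros c d Hcd. apply (is_RInt_Rext (fun _ => 0)); [|apply is_RInt_Rzero].
    intros x Hx. rewrite Rmin_left, Rmax_right in Hx by lra.
    unfold trunc_pow. destruct (Rle_dec 0 x); auto; lra. }
  assert (Hpos : forall c d, 0 <= c <= d ->
    is_RInt (fun z => trunc_pow z m) c d ((d ^ S m - c ^ S m) / INR (S m))).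
  { intros c d Hcd. apply (is_RInt_Rext (fun z => z ^ m)); [|apply is_RInt_pow].
    intros x Hx. rewrite Rmin_left, Rmax_right in Hx by lra. rewrite trunc_pow_nonneg; auto; lra. }
  destruct (Rle_dec z1 0); [|destruct (Rle_dec 0 z0)].
  - rewrite !trunc_pow_nonpos by lra. unfold Rdiv. rewrite Rminus_diag, Rmult_0_l. auto.
  - rewrite !trunc_pow_nonneg by lra. auto.
  - rewrite trunc_pow_nonneg, trunc_pow_nonpos by lra.
    replace ((z1 ^ S m - 0) / INR (S m)) with (0 + (z1 ^ S m - 0 ^ S m) / INR (S m))
      by (simpl; unfold Rdiv; ring).
    apply is_RInt_RChasles with 0; [apply Hneg | apply Hpos]; lra.
Qed.

Lemma is_RInt_trunc_pow m z0 z1 :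
  is_RInt (fun z => trunc_pow z m) z0 z1 ((trunc_pow z1 (S m) - trunc_pow z0 (S m)) / INR (S m)).
Proof.
  destruct (Rle_dec z0 z1); [now apply is_RInt_trunc_pow_le|].
  replace ((trunc_pow z1 (S m) - trunc_pow z0 (S m)) / INR (S m))
    with (- ((trunc_pow z0 (S m) - trunc_pow z1 (S m)) / INR (S m))) by (unfold Rdiv; ring).
  apply is_RInt_Rswap, is_RInt_trunc_pow_le. lra.
Qed.

Lemma is_RInt_trunc_pow_sub_var m u c d :
  is_RInt (fun t => trunc_pow (u - t) m) c d ((trunc_pow (u - c) (S m) - trunc_pow (u - d) (S m)) / INR (S m)).
Proof.
  pose proof (is_RInt_trunc_pow m (-1 * c + u) (-1 * d + u)) as H.
  apply is_RInt_Rcomp_lin, (is_RInt_Rscal _ _ _ (-1)) in H.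
  replace (-1 * c + u) with (u - c) in H by ring. replace (-1 * d + u) with (u - d) in H by ring.
  replace ((trunc_pow (u - c) (S m) - trunc_pow (u - d) (S m)) / INR (S m))
    with (-1 * ((trunc_pow (u - d) (S m) - trunc_pow (u - c) (S m)) / INR (S m))) by (unfold Rdiv; ring).
  eapply is_RInt_Rext; [|exact H]. intros x _. cbv beta. replace (-1 * x + u) with (u - x) by ring. ring.
Qed.

Lemma is_RInt_trunc_pow_var_sub m c a b :
  is_RInt (fun u => trunc_pow (u - c) m) a b ((trunc_pow (b - c) (S m) - trunc_pow (a - c) (S m)) / INR (S m)).
Proof.
  pose proof (is_RInt_trunc_pow m (1 * a + - c) (1 * b + - c)) as H.
  apply is_RInt_Rcomp_lin in H.
  replace (1 * a + - c) with (a - c) in H by ring. replace (1 * b + - c) with (b - c) in H by ring.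
  eapply is_RInt_Rext; [|exact H]. intros x _. cbv beta. replace (1 * x + - c) with (x - c) by ring. ring.
Qed.

(** * Repeated integration *)

Lemma iterInt_ext a m (g1 g2 : R -> R) :
  (forall x, g1 x = g2 x) -> forall y, iterInt a m g1 y = iterInt a m g2 y.
Proof.
  revert g1 g2; induction m as [|m IH]; intros g1 g2 Hg y; simpl; auto.
  apply RInt_ext_R. intros; now apply IH.
Qed.

Lemma iterInt_succ_inner a m (g : R -> R) y :
  iterInt a (S m) g y = iterInt a m (fun z => RInt g a z) y.
Proof.
  revert y; induction m as [|m IH]; intros y; [reflexivity|].
  change (RInt (fun t => iterInt a (S m) g t) a y = RInt (fun t => iterInt a m (fun z => RInt g a z) t) a y).
  apply RInt_ext_R. intros; apply IH.
Qed.

Lemma continuous_iterInt a m (G : R -> R) :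
  (forall x, continuous G x) -> forall x, continuous (iterInt a m G) x.
Proof.
  intros HG; induction m as [|m IH]; intros x; simpl; auto.
  apply (continuous_of_derive _ _ _ (is_derive_RInt_continuous _ a x IH)).
Qed.

Section Cauchy.
Variables (a : R) (G : R -> R).
Hypothesis G_cont : forall x, continuous G x.

(* The extra weight [s ^ p] makes the family closed under [d/dy], since
   [(y - s) ^ (m + 1) = y (y - s) ^ m - s (y - s) ^ m]. *)
Definition weighted_int (m p : nat) (y : R) : R := RInt (fun s => s ^ p * (y - s) ^ m * G s) a y.

Lemma weighted_int_succ m p y : weighted_int (S m) p y = y * weighted_int m p y - weighted_int m (S p) y.
Proof.
  unfold weighted_int. apply is_RInt_unique.
  apply (is_RInt_Rext (fun s => y * (s ^ p * (y - s) ^ m * G s) - s ^ S p * (y - s) ^ m * G s)).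
  { intros; simpl; ring. }
  apply is_RInt_Rminus; [apply is_RInt_Rscal|]; apply is_RInt_continuous; rcont.
Qed.

Lemma is_derive_weighted_int_0 p y : is_derive (weighted_int 0 p) y (y ^ p * G y).
Proof.
  apply (is_derive_Rext (fun z => RInt (fun s => s ^ p * G s) a z)).
  { intros t. unfold weighted_int. apply RInt_ext_R. intros; simpl; ring. }
  apply (is_derive_RInt_continuous (fun s => s ^ p * G s)). rcont.
Qed.

Lemma is_derive_weighted_int_S m p y :
  is_derive (weighted_int (S m) p) y (INR (S m) * weighted_int m p y).
Proof.
  revert p y; induction m as [|m IH]; intros p y.
  - apply (is_derive_Rext (fun z => z * weighted_int 0 p z - weighted_int 0 (S p) z)).
    { intros t; symmetry; apply weighted_int_succ. }
    replace (INR 1 * weighted_int 0 p y)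
      with ((1 * weighted_int 0 p y + y * (y ^ p * G y)) - y ^ S p * G y) by (simpl; ring).
    apply is_derive_Rminus; [apply is_derive_Rmult; [apply is_derive_Rid|]|];
      apply is_derive_weighted_int_0.
  - apply (is_derive_Rext (fun z => z * weighted_int (S m) p z - weighted_int (S m) (S p) z)).
    { intros t; symmetry; apply weighted_int_succ. }
    replace (INR (S (S m)) * weighted_int (S m) p y) with
      ((1 * weighted_int (S m) p y + y * (INR (S m) * weighted_int m p y))
       - INR (S m) * weighted_int m (S p) y)
      by (rewrite weighted_int_succ, (S_INR (S m)); ring).
    apply is_derive_Rminus; [apply is_derive_Rmult; [apply is_derive_Rid|]|]; apply IH.
Qed.

Lemma continuous_weighted_int m p y : continuous (weighted_int m p) y.
Proof.
  destruct m.
  - exact (continuous_of_derive _ _ _ (is_derive_weighted_int_0 p y)).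
  - exact (continuous_of_derive _ _ _ (is_derive_weighted_int_S m p y)).
Qed.

Lemma weighted_int_base m p : weighted_int m p a = 0.
Proof. unfold weighted_int. rewrite RInt_point. reflexivity. Qed.

Lemma iterInt_weighted_int m y :
  iterInt a (S m) G y = weighted_int m 0 y / INR (Factorial.fact m).
Proof.
  revert y; induction m as [|m IH]; intros y.
  - simpl. rewrite Rdiv_1_r. apply RInt_ext_R. intros; ring.
  - change (RInt (fun t => iterInt a (S m) G t) a y = weighted_int (S m) 0 y / INR (Factorial.fact (S m))).
    rewrite (RInt_ext_R _ (fun t => weighted_int m 0 t / INR (Factorial.fact m))) by (intros; apply IH).
    apply is_RInt_unique.
    replace (weighted_int (S m) 0 y / INR (Factorial.fact (S m)))
      with (weighted_int (S m) 0 y / INR (Factorial.fact (S m)) - weighted_int (S m) 0 a / INR (Factorial.fact (S m)))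
      by (rewrite weighted_int_base; unfold Rdiv; ring).
    assert (Hfact : INR (Factorial.fact (S m)) = INR (S m) * INR (Factorial.fact m))
      by (rewrite <- mult_INR; reflexivity).
    apply (is_RInt_of_derive (fun z => weighted_int (S m) 0 z / INR (Factorial.fact (S m)))).
    + intros x. apply (is_derive_Rext (fun z => / INR (Factorial.fact (S m)) * weighted_int (S m) 0 z)).
      { intros; unfold Rdiv; ring. }
      replace (weighted_int m 0 x / INR (Factorial.fact m))
        with (/ INR (Factorial.fact (S m)) * (INR (S m) * weighted_int m 0 x)).
      * apply is_derive_scal, is_derive_weighted_int_S.
      * rewrite Hfact. field. split; apply not_0_INR; [apply Factorial.fact_neq_0 | lia].
    + intros x. apply continuous_Rmult; [apply continuous_weighted_int | rcont].
Qed.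

Lemma iterInt_cauchy m y :
  iterInt a (S m) G y = RInt (fun s => (y - s) ^ m * G s) a y / INR (Factorial.fact m).
Proof.
  rewrite iterInt_weighted_int. f_equal. apply RInt_ext_R. intros; simpl; ring.
Qed.

End Cauchy.

Lemma sumR_ext K (F1 F2 : nat -> R) :
  (forall i, (i < K)%nat -> F1 i = F2 i) -> sumR K F1 = sumR K F2.
Proof.
  induction K as [|K IH]; intros H; simpl; auto.
  rewrite IH by (intros; apply H; lia). rewrite H by lia. reflexivity.
Qed.

Lemma sumR_scal K X (F : nat -> R) : sumR K (fun j => X * F j) = X * sumR K F.
Proof. induction K as [|K IH]; simpl; [ring|]. rewrite IH. ring. Qed.

Lemma sumR_plus K (F G : nat -> R) : sumR K (fun j => F j + G j) = sumR K F + sumR K G.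
Proof. induction K as [|K IH]; simpl; [ring|]. rewrite IH. ring. Qed.

Lemma sumR_swap K1 K2 (c l : nat -> R) (X : nat -> nat -> R) :
  sumR K1 (fun j => c j * sumR K2 (fun i => l i * X j i)) =
  sumR K2 (fun i => l i * sumR K1 (fun j => c j * X j i)).
Proof.
  induction K1 as [|K1 IH]; simpl.
  - induction K2 as [|K2 IH2]; simpl; [ring|]. rewrite <- IH2. ring.
  - rewrite IH, <- sumR_scal, <- sumR_plus. apply sumR_ext. intros; ring.
Qed.

Lemma is_RInt_sumR K (lam : nat -> R) (F : nat -> R -> R) (v : nat -> R) a b :
  (forall i, (i < K)%nat -> is_RInt (F i) a b (v i)) ->
  is_RInt (fun x => sumR K (fun i => lam i * F i x)) a b (sumR K (fun i => lam i * v i)).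
Proof.
  induction K as [|K IH]; intros H; simpl; [apply is_RInt_Rzero|].
  apply is_RInt_Rplus; [apply IH; auto | apply is_RInt_Rscal; auto].
Qed.

Lemma iterInt_sumR_continuous a m K (lam : nat -> R) (H : nat -> R -> R) y :
  (forall i, (i < K)%nat -> forall x, continuous (H i) x) ->
  iterInt a m (fun x => sumR K (fun i => lam i * H i x)) y = sumR K (fun i => lam i * iterInt a m (H i) y).
Proof.
  intros Hc. revert y; induction m as [|m IH]; intros y; [reflexivity|].
  change (RInt (iterInt a m (fun x => sumR K (fun i => lam i * H i x))) a y
          = sumR K (fun i => lam i * RInt (iterInt a m (H i)) a y)).
  rewrite (RInt_ext_R _ _ a y IH). apply is_RInt_unique, is_RInt_sumR.
  intros i Hi. apply is_RInt_continuous, continuous_iterInt; auto.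
Qed.

(* Linearity for integrands that are only integrable: integrate once, then use
   the continuity of the primitives. *)
Lemma iterInt_sumR a m K (lam : nat -> R) (g : nat -> R -> R) y :
  (forall i, (i < K)%nat -> forall z, ex_RInt (g i) a z) ->
  (forall i, (i < K)%nat -> forall z, continuous (fun x => RInt (g i) a x) z) ->
  iterInt a (S m) (fun x => sumR K (fun i => lam i * g i x)) y
  = sumR K (fun i => lam i * iterInt a (S m) (g i) y).
Proof.
  intros Hex Hc. rewrite iterInt_succ_inner.
  rewrite (iterInt_ext a m _ (fun z => sumR K (fun i => lam i * RInt (g i) a z))).
  - rewrite iterInt_sumR_continuous by auto.
    apply sumR_ext. intros i _. now rewrite iterInt_succ_inner.
  - intros z. apply is_RInt_unique, is_RInt_sumR. intros i Hi.
    apply (RInt_correct (V := R_CompleteNormedModule)). auto.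
Qed.

(** * Integrals of a continuous function restricted to a subinterval *)

Definition piece (p q : R) (phi : R -> R) (x : R) : R :=
  if Rle_dec p x then (if Rle_dec x q then phi x else 0) else 0.

Definition clamp (p q y : R) : R := Rmax p (Rmin y q).

Lemma Rmin_Rabs x y : Rmin x y = (x + y - Rabs (x - y)) / 2.
Proof. unfold Rmin. destruct (Rle_dec x y); [rewrite Rabs_left1 | rewrite Rabs_right]; lra. Qed.

Lemma Rmax_Rabs x y : Rmax x y = (x + y + Rabs (x - y)) / 2.
Proof. unfold Rmax. destruct (Rle_dec x y); [rewrite Rabs_left1 | rewrite Rabs_right]; lra. Qed.

Lemma continuous_clamp p q y : continuous (clamp p q) y.
Proof.
  apply (continuous_ext (fun x => (p + (x + q - Rabs (x - q)) / 2 + Rabs (p - (x + q - Rabs (x - q)) / 2)) / 2)).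
  - intros x. unfold clamp. now rewrite Rmax_Rabs, Rmin_Rabs.
  - rcont.
Qed.

Section Piece.
Variables (p q : R) (phi : R -> R).
Hypotheses (Hpq : p <= q) (phi_cont : forall x, continuous phi x).

Definition piece_prim (y : R) : R := RInt phi p y.

Lemma piece_prim_start : piece_prim p = 0.
Proof. unfold piece_prim. rewrite RInt_point. reflexivity. Qed.

Lemma is_derive_piece_prim y : is_derive piece_prim y (phi y).
Proof. now apply is_derive_RInt_continuous. Qed.

Lemma continuous_piece_prim y : continuous piece_prim y.
Proof. exact (continuous_of_derive _ _ _ (is_derive_piece_prim y)). Qed.

Lemma continuous_piece_prim_clamp y : continuous (fun z => piece_prim (clamp p q z)) y.
Proof. apply continuous_Rcomp; [apply continuous_clamp | apply continuous_piece_prim]. Qed.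

Lemma is_RInt_piece_zero c d : c <= d -> (d <= p \/ q <= c) -> is_RInt (piece p q phi) c d 0.
Proof.
  intros Hcd Hout. apply (is_RInt_Rext (fun _ => 0)); [|apply is_RInt_Rzero].
  intros x Hx. rewrite Rmin_left, Rmax_right in Hx by lra.
  unfold piece. destruct (Rle_dec p x); [destruct (Rle_dec x q)|]; auto; lra.
Qed.

Lemma is_RInt_piece_inside y : p <= y <= q -> is_RInt (piece p q phi) p y (piece_prim y).
Proof.
  intros Hy. apply (is_RInt_Rext phi); [|now apply is_RInt_continuous].
  intros x Hx. rewrite Rmin_left, Rmax_right in Hx by lra.
  unfold piece. destruct (Rle_dec p x); [destruct (Rle_dec x q)|]; auto; lra.
Qed.

Lemma is_RInt_piece a y : a <= p -> is_RInt (piece p q phi) a y (piece_prim (clamp p q y)).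
Proof.
  intros Hap. unfold clamp. destruct (Rle_dec y p); [|destruct (Rle_dec y q)].
  - rewrite Rmin_left, Rmax_left, piece_prim_start by lra.
    destruct (Rle_dec a y).
    + apply is_RInt_piece_zero; lra.
    + rewrite <- Ropp_0. apply is_RInt_Rswap, is_RInt_piece_zero; lra.
  - rewrite Rmin_left, Rmax_right by lra. rewrite <- (Rplus_0_l (piece_prim y)).
    apply is_RInt_RChasles with p; [apply is_RInt_piece_zero | apply is_RInt_piece_inside]; lra.
  - rewrite Rmin_right, Rmax_right by lra. rewrite <- (Rplus_0_r (piece_prim q)), <- (Rplus_0_l (piece_prim q)).
    apply is_RInt_RChasles with q; [apply is_RInt_RChasles with p|];
      [apply is_RInt_piece_zero | apply is_RInt_piece_inside | apply is_RInt_piece_zero]; lra.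
Qed.

Lemma RInt_piece a y : a <= p -> RInt (piece p q phi) a y = piece_prim (clamp p q y).
Proof. intros Hap. now apply is_RInt_unique, is_RInt_piece. Qed.

Lemma ex_RInt_piece a y : a <= p -> ex_RInt (piece p q phi) a y.
Proof. intros Hap. eexists. now apply is_RInt_piece. Qed.

Lemma continuous_RInt_piece a y : a <= p -> continuous (fun z => RInt (piece p q phi) a z) y.
Proof.
  intros Hap. apply (continuous_ext (fun z => piece_prim (clamp p q z))).
  - intros z. symmetry. now apply RInt_piece.
  - apply continuous_piece_prim_clamp.
Qed.

(* Integration by parts against [W t := - (b - t) ^ (m + 1) / (m + 1)], which
   vanishes at [b]; the boundary term at [p] vanishes because [piece_prim p = 0]. *)
Lemma RInt_pow_piece_prim_clamp a b m : a <= p -> q <= b ->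
  RInt (fun s => (b - s) ^ m * piece_prim (clamp p q s)) a b
  = RInt (fun t => (b - t) ^ S m / INR (S m) * phi t) p q.
Proof.
  intros Hap Hqb.
  set (W := fun t => - (b - t) ^ S m / INR (S m)).
  assert (HW : forall t, is_derive W t ((b - t) ^ m)) by (intros; apply is_derive_pow_sub_antideriv).
  assert (HWc : forall t, continuous W t) by (intros t; exact (continuous_of_derive _ _ _ (HW t))).
  set (Rhs := RInt (fun t => (b - t) ^ S m / INR (S m) * phi t) p q).
  assert (Hrhs : is_RInt (fun t => W t * phi t) p q (- Rhs)).
  { apply (is_RInt_Rext (fun t => -1 * ((b - t) ^ S m / INR (S m) * phi t))).
    - intros t _. unfold W, Rdiv. ring.
    - replace (- Rhs) with (-1 * Rhs) by ring. apply is_RInt_Rscal, is_RInt_continuous. rcont. }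
  assert (Hleft : is_RInt (fun s => (b - s) ^ m * piece_prim (clamp p q s)) a p 0).
  { apply (is_RInt_Rext (fun _ => 0)); [|apply is_RInt_Rzero].
    intros x Hx. rewrite Rmin_left, Rmax_right in Hx by lra.
    unfold clamp. rewrite Rmin_left, Rmax_left, piece_prim_start by lra. ring. }
  assert (Hmid : is_RInt (fun s => (b - s) ^ m * piece_prim (clamp p q s)) p q (W q * piece_prim q + Rhs)).
  { apply (is_RInt_Rext (fun t => ((b - t) ^ m * piece_prim t + W t * phi t) - W t * phi t)).
    - intros x Hx. rewrite Rmin_left, Rmax_right in Hx by lra.
      unfold clamp. rewrite Rmin_left, Rmax_right by lra. ring.
    - replace (W q * piece_prim q + Rhs) with ((W q * piece_prim q - W p * piece_prim p) - - Rhs)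
        by (rewrite piece_prim_start; ring).
      apply is_RInt_Rminus; auto.
      apply (is_RInt_of_derive (fun t => W t * piece_prim t)).
      + intros x. apply is_derive_Rmult; [apply HW | apply is_derive_piece_prim].
      + intros x. apply continuous_Rplus; apply continuous_Rmult; auto using continuous_piece_prim; rcont. }
  assert (Hright : is_RInt (fun s => (b - s) ^ m * piece_prim (clamp p q s)) q b (- (W q * piece_prim q))).
  { apply (is_RInt_Rext (fun t => (b - t) ^ m * piece_prim q)).
    - intros x Hx. rewrite Rmin_left, Rmax_right in Hx by lra.
      unfold clamp. rewrite Rmin_right, Rmax_right by lra. reflexivity.
    - replace (- (W q * piece_prim q)) with (W b * piece_prim q - W q * piece_prim q)
        by (unfold W; rewrite Rminus_diag, pow_i by lia; field; apply not_0_INR; lia).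
      apply (is_RInt_of_derive (fun t => W t * piece_prim q)); [|rcont].
      intros x. replace ((b - x) ^ m * piece_prim q) with ((b - x) ^ m * piece_prim q + W x * 0) by ring.
      apply (is_derive_Rmult W (fun _ => piece_prim q)); [apply HW | apply is_derive_Rconst]. }
  apply is_RInt_unique. replace Rhs with ((0 + (W q * piece_prim q + Rhs)) + - (W q * piece_prim q)) by ring.
  apply is_RInt_RChasles with q; [apply is_RInt_RChasles with p|]; auto.
Qed.

Lemma iterInt_piece a b m : a <= p -> q <= b ->
  iterInt a (S m) (piece p q phi) b
  = RInt (fun t => (b - t) ^ m / INR (Factorial.fact m) * phi t) p q.
Proof.
  intros Hap Hqb. destruct m as [|m].
  - change (RInt (piece p q phi) a b = RInt (fun t => (b - t) ^ 0 / INR (Factorial.fact 0) * phi t) p q).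
    rewrite RInt_piece by auto. unfold clamp. rewrite Rmin_right, Rmax_right by lra.
    apply RInt_ext_R. intros; simpl; field.
  - rewrite iterInt_succ_inner, (iterInt_ext a (S m) _ (fun z => piece_prim (clamp p q z)))
      by (intros; now apply RInt_piece).
    rewrite iterInt_cauchy by apply continuous_piece_prim_clamp.
    rewrite RInt_pow_piece_prim_clamp by auto.
    symmetry. apply is_RInt_unique.
    apply (is_RInt_Rext (fun t => / INR (Factorial.fact m) * ((b - t) ^ S m / INR (S m) * phi t))).
    + intros x _. change (Factorial.fact (S m)) with (S m * Factorial.fact m)%nat.
      rewrite mult_INR. field. split; apply not_0_INR; [apply Factorial.fact_neq_0 | lia].
    + rewrite Rdiv_def, Rmult_comm. apply is_RInt_Rscal, is_RInt_continuous. rcont.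
Qed.

End Piece.

(** * The sign pattern of Chebyshev polynomials of the second kind *)

Inductive step_on (s : R -> R) : R -> R -> Prop :=
| step_const c d v : c <= d -> (forall t, c < t < d -> s t = v) -> step_on s c d
| step_concat c e d : step_on s c e -> step_on s e d -> step_on s c d.

Lemma step_on_le s c d : step_on s c d -> c <= d.
Proof. induction 1; lra. Qed.

Lemma chebU_cos_sin n x :
  chebU n (cos x) * sin x = sin (INR (S n) * x) /\
  chebU (S n) (cos x) * sin x = sin (INR (S (S n)) * x).
Proof.
  induction n as [|n [IH1 IH2]].
  - simpl. replace (1 * x) with x by ring. replace ((1 + 1) * x) with (2 * x) by ring.
    rewrite sin_2a. split; ring.
  - split; [exact IH2|].
    change (chebU (S (S n)) (cos x)) with (2 * cos x * chebU (S n) (cos x) - chebU n (cos x)).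
    replace (INR (S (S (S n))) * x) with (INR (S (S n)) * x + x) by (rewrite (S_INR (S (S n))); ring).
    replace (INR (S n) * x) with (INR (S (S n)) * x - x) in IH1 by (rewrite (S_INR (S n)); ring).
    rewrite sin_plus. rewrite sin_minus in IH1.
    replace ((2 * cos x * chebU (S n) (cos x) - chebU n (cos x)) * sin x)
      with (2 * cos x * (chebU (S n) (cos x) * sin x) - chebU n (cos x) * sin x) by ring.
    rewrite IH1, IH2. ring.
Qed.

Lemma continuity_chebU n : continuity (chebU n).
Proof.
  assert (H : forall x, continuous (chebU n) x /\ continuous (chebU (S n)) x).
  { intros x. induction n as [|n [IH1 IH2]].
    - split; [apply (continuous_ext (fun _ => 1)) | apply (continuous_ext (fun y => 2 * y))];
        auto; rcont.
    - split; [exact IH2|].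
      apply (continuous_ext (fun y => 2 * y * chebU (S n) y - chebU n y)); auto; rcont. }
  intros x. apply continuity_pt_filterlim, H.
Qed.

Lemma IVT_sign_change f x y :
  continuity f -> x < y -> f x * f y < 0 -> exists z, x <= z <= y /\ f z = 0.
Proof.
  intros Hc Hxy Hm. destruct (Rlt_dec (f x) 0) as [Hx|Hx].
  - destruct (IVT f x y Hc Hxy Hx) as [z Hz]; [nra|]. exists z; tauto.
  - assert (Hpos : 0 < f x) by (destruct (Req_dec (f x) 0) as [E|]; [rewrite E in Hm|]; lra).
    destruct (IVT (- f)%F x y (continuity_opp f Hc) Hxy) as [z Hz]; unfold opp_fct in *; [nra..|].
    exists z. split; [tauto | lra].
Qed.

Lemma sgnR_constant_without_roots f c d :
  continuity f -> (forall t, c < t < d -> f t <> 0) ->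
  forall t, c < t < d -> sgnR (f t) = sgnR (f ((c + d) / 2)).
Proof.
  intros Hc Hnz t Ht. set (mid := (c + d) / 2).
  assert (Hm : c < mid < d) by (unfold mid; lra).
  assert (Ht0 := Hnz t Ht). assert (Hm0 := Hnz mid Hm).
  assert (Hpos : 0 < f t * f mid).
  { destruct (Rlt_le_dec 0 (f t * f mid)) as [|Hle]; auto. exfalso.
    assert (Hneg : f t * f mid < 0).
    { destruct Hle as [|H0]; auto. apply Rmult_integral in H0. tauto. }
    destruct (Rlt_le_dec t mid) as [Hlt|Hge].
    - destruct (IVT_sign_change f t mid Hc Hlt Hneg) as [z [Hz1 Hz2]]. apply (Hnz z); auto; lra.
    - destruct (Req_dec t mid) as [Heq|Hne]; [subst; nra|].
      rewrite Rmult_comm in Hneg.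
      destruct (IVT_sign_change f mid t Hc ltac:(lra) Hneg) as [z [Hz1 Hz2]]. apply (Hnz z); auto; lra. }
  unfold sgnR. destruct (Rlt_dec 0 (f t)), (Rlt_dec 0 (f mid)), (Rlt_dec (f t) 0), (Rlt_dec (f mid) 0);
    auto; nra.
Qed.

Section ChebyshevNodes.
Variable n : nat.

(* The zeros of [chebU n] are [cos (k pi / (n + 1))], [k = 1 .. n]; together with
   [-1] and [1] they are listed increasingly as [cheb_node 0 .. cheb_node (n + 1)]. *)
Definition cheb_angle (j : nat) : R := (INR (S n) - INR j) * (PI / INR (S n)).
Definition cheb_node (j : nat) : R := cos (cheb_angle j).

Lemma cheb_step_pos : 0 < PI / INR (S n).
Proof. apply Rdiv_lt_0_compat; [apply PI_RGT_0 | apply lt_0_INR; lia]. Qed.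

Lemma cheb_angle_bounds j : (j <= S n)%nat -> 0 <= cheb_angle j <= PI.
Proof.
  intros Hj. unfold cheb_angle. pose proof cheb_step_pos. apply le_INR in Hj. pose proof (pos_INR j).
  assert (HPI : INR (S n) * (PI / INR (S n)) = PI) by (field; apply not_0_INR; lia).
  split; nra.
Qed.

Lemma cheb_angle_S j : cheb_angle (S j) = cheb_angle j - PI / INR (S n).
Proof. unfold cheb_angle. rewrite (S_INR j). ring. Qed.

Lemma cheb_node_lt j : (j < S n)%nat -> cheb_node j < cheb_node (S j).
Proof.
  intros Hj. pose proof cheb_step_pos.
  apply cos_decreasing_1; try apply cheb_angle_bounds; try lia.
  rewrite cheb_angle_S. lra.
Qed.

Lemma cheb_node_0 : cheb_node 0 = -1.
Proof.
  unfold cheb_node, cheb_angle. rewrite <- cos_PI. f_equal. change (INR 0) with 0.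
  field. apply not_0_INR. lia.
Qed.

Lemma cheb_node_last : cheb_node (S n) = 1.
Proof. unfold cheb_node, cheb_angle. rewrite Rminus_diag, Rmult_0_l. apply cos_0. Qed.

Lemma chebU_nonzero_between_nodes j t :
  (j < S n)%nat -> cheb_node j < t < cheb_node (S j) -> chebU n t <> 0.
Proof.
  intros Hj Ht Hz. pose proof cheb_step_pos.
  assert (Hb1 := cheb_angle_bounds j ltac:(lia)). assert (Hb2 := cheb_angle_bounds (S j) ltac:(lia)).
  assert (Ht1 : -1 < t < 1) by (pose proof (COS_bound (cheb_angle j)); pose proof (COS_bound (cheb_angle (S j)));
    unfold cheb_node in Ht; lra).
  set (a := acos t). assert (Ha := acos_bound_lt t Ht1). fold a in Ha.
  assert (Hca : cos a = t) by (apply cos_acos; lra).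
  destruct (chebU_cos_sin n a) as [Hsin _]. rewrite Hca, Hz, Rmult_0_l in Hsin.
  destruct (sin_eq_0_0 _ (eq_sym Hsin)) as [K HK].
  assert (HaK : a = IZR K * (PI / INR (S n))).
  { assert (HS : INR (S n) <> 0) by (apply not_0_INR; lia).
    apply (Rmult_eq_reg_l (INR (S n))); auto. rewrite HK. field. auto. }
  unfold cheb_node in Ht. rewrite <- Hca in Ht.
  assert (Hlow : cheb_angle (S j) < a) by (apply cos_decreasing_0; lra).
  assert (Hhigh : a < cheb_angle j) by (apply cos_decreasing_0; lra).
  rewrite cheb_angle_S in Hlow. unfold cheb_angle in Hlow, Hhigh. rewrite HaK in Hlow, Hhigh.
  apply Rmult_lt_reg_r in Hhigh; [|lra].
  assert (Hlow' : INR (S n) - INR j - 1 < IZR K) by (apply (Rmult_lt_reg_r (PI / INR (S n))); lra).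
  rewrite !INR_IZR_INZ, <- minus_IZR in Hhigh, Hlow'. rewrite <- minus_IZR in Hlow'.
  apply lt_IZR in Hhigh. apply lt_IZR in Hlow'. lia.
Qed.

Lemma step_on_sgnR_chebU_upto j :
  (1 <= j <= S n)%nat -> step_on (fun t => sgnR (chebU n t)) (cheb_node 0) (cheb_node j).
Proof.
  induction j as [|j IH]; intros Hj; [lia|].
  assert (Hpiece : step_on (fun t => sgnR (chebU n t)) (cheb_node j) (cheb_node (S j))).
  { apply step_const with (sgnR (chebU n ((cheb_node j + cheb_node (S j)) / 2))).
    - left; apply cheb_node_lt; lia.
    - apply sgnR_constant_without_roots; [apply continuity_chebU|].
      intros; apply (chebU_nonzero_between_nodes j); auto; lia. }
  destruct j; [exact Hpiece|].
  apply step_concat with (cheb_node (S j)); auto. apply IH; lia.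
Qed.

Lemma step_on_sgnR_chebU : step_on (fun t => sgnR (chebU n t)) (-1) 1.
Proof. rewrite <- cheb_node_0, <- cheb_node_last. apply step_on_sgnR_chebU_upto. lia. Qed.

End ChebyshevNodes.

(** * The perfect spline [psi] *)

Section TruncatedPowerTransform.
Variables (r : nat) (s : R -> R).

Definition tpow_transform (c d u : R) : R := RInt (fun t => tpow u t r * s t) c d.
Definition tpow_moment (c d : R) : R := RInt (fun t => (1 - t) ^ S r * s t) c d.

(* Fubini for [s] on [[c, d]] inside [[-1, 1]], using [int_{-1}^1 (u - t)_+^r du = (1 - t)^(r+1) / (r+1)]. *)
Definition tpow_transform_spec (c d : R) : Prop :=
  (forall u, is_RInt (fun t => tpow u t r * s t) c d (tpow_transform c d u)) /\
  (forall u, continuous (tpow_transform c d) u) /\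
  is_RInt (fun t => (1 - t) ^ S r * s t) c d (tpow_moment c d) /\
  is_RInt (tpow_transform c d) (-1) 1 (/ INR (S r) * tpow_moment c d).

Lemma tpow_transform_spec_const c d v :
  -1 <= c <= d -> d <= 1 -> (forall t, c < t < d -> s t = v) -> tpow_transform_spec c d.
Proof.
  intros Hc Hd Hs.
  set (V := fun u => v * ((trunc_pow (u - c) (S r) - trunc_pow (u - d) (S r)) / INR (S r))).
  assert (HV : forall u, is_RInt (fun t => tpow u t r * s t) c d (V u)).
  { intros u. apply (is_RInt_Rext (fun t => v * trunc_pow (u - t) r)).
    - intros x Hx. rewrite Rmin_left, Rmax_right in Hx by lra. rewrite Hs, tpow_trunc_pow by lra. ring.
    - apply is_RInt_Rscal, is_RInt_trunc_pow_sub_var. }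
  assert (HTV : forall u, tpow_transform c d u = V u) by (intros; now apply is_RInt_unique).
  set (Mv := v * (((1 - c) ^ S (S r) - (1 - d) ^ S (S r)) / INR (S (S r)))).
  assert (HM : is_RInt (fun t => (1 - t) ^ S r * s t) c d Mv).
  { apply (is_RInt_Rext (fun t => v * (1 - t) ^ S r)).
    - intros x Hx. rewrite Rmin_left, Rmax_right in Hx by lra. rewrite Hs by lra. ring.
    - apply is_RInt_Rscal, is_RInt_one_sub_pow. }
  assert (HMe : tpow_moment c d = Mv) by (now apply is_RInt_unique).
  assert (HtV : forall e u, continuous (fun u => trunc_pow (u - e) (S r)) u).
  { intros e u. apply (continuous_Rcomp (fun y => y - e) (fun y => trunc_pow y (S r))); [rcont|].
    apply continuous_trunc_pow. lia. }
  split; [|split; [|split]].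
  - intros u. rewrite HTV. apply HV.
  - intros u. apply (continuous_ext V); [intros; symmetry; apply HTV|]. unfold V.
    apply continuous_Rmult; [rcont|]. apply continuous_Rdiv_const, continuous_Rminus; apply HtV.
  - now rewrite HMe.
  - apply (is_RInt_Rext V); [intros; symmetry; apply HTV|].
    assert (Hc2 := is_RInt_trunc_pow_var_sub (S r) c (-1) 1).
    assert (Hd2 := is_RInt_trunc_pow_var_sub (S r) d (-1) 1).
    rewrite (trunc_pow_nonpos (-1 - c)), (trunc_pow_nonneg (1 - c)) in Hc2 by lra.
    rewrite (trunc_pow_nonpos (-1 - d)), (trunc_pow_nonneg (1 - d)) in Hd2 by lra.
    pose proof (is_RInt_Rscal _ _ _ (v / INR (S r)) _ (is_RInt_Rminus _ _ _ _ _ _ Hc2 Hd2)) as H.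
    eapply is_RInt_Rext; [|replace (/ INR (S r) * tpow_moment c d) with
      (v / INR (S r) * (((1 - c) ^ S (S r) - 0) / INR (S (S r)) - ((1 - d) ^ S (S r) - 0) / INR (S (S r))));
      [exact H|]].
    + intros; unfold V, Rdiv; ring.
    + rewrite HMe. unfold Mv, Rdiv. ring.
Qed.

Lemma tpow_transform_spec_concat c e d :
  c <= e <= d -> tpow_transform_spec c e -> tpow_transform_spec e d -> tpow_transform_spec c d.
Proof.
  intros Hced [A1 [B1 [C1 D1]]] [A2 [B2 [C2 D2]]].
  assert (HT : forall u, tpow_transform c d u = tpow_transform c e u + tpow_transform e d u).
  { intros u. apply is_RInt_unique. apply is_RInt_RChasles with e; auto. }
  assert (HM : tpow_moment c d = tpow_moment c e + tpow_moment e d).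
  { apply is_RInt_unique. apply is_RInt_RChasles with e; auto. }
  split; [|split; [|split]].
  - intros u. rewrite HT. apply is_RInt_RChasles with e; auto.
  - intros u. apply (continuous_ext (fun u => tpow_transform c e u + tpow_transform e d u)).
    + intros; symmetry; auto.
    + apply continuous_Rplus; auto.
  - rewrite HM. apply is_RInt_RChasles with e; auto.
  - apply (is_RInt_Rext (fun u => tpow_transform c e u + tpow_transform e d u)).
    + intros; symmetry; auto.
    + rewrite HM, Rmult_plus_distr_l. apply is_RInt_Rplus; auto.
Qed.

Lemma tpow_transform_spec_step c d : step_on s c d -> -1 <= c -> d <= 1 -> tpow_transform_spec c d.
Proof.
  induction 1 as [c d v Hcd Hs | c e d H1 IH1 H2 IH2]; intros Hc Hd.
  - apply tpow_transform_spec_const with v; auto; lra.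
  - pose proof (step_on_le s c e H1). pose proof (step_on_le s e d H2).
    apply tpow_transform_spec_concat with e; [lra | apply IH1 | apply IH2]; lra.
Qed.

End TruncatedPowerTransform.

Lemma psi_tpow_transform r u :
  psi r u = / INR (Factorial.fact r) * tpow_transform r (fun t => sgnR (chebU (r + 1) t)) (-1) 1 u.
Proof. reflexivity. Qed.

Lemma psi_spec r :
  (forall u, continuous (psi r) u) /\
  is_RInt (psi r) (-1) 1
    (/ INR (Factorial.fact (S r)) * RInt (fun t => (1 - t) ^ S r * sgnR (chebU (r + 1) t)) (-1) 1).
Proof.
  destruct (tpow_transform_spec_step r _ (-1) 1 (step_on_sgnR_chebU (r + 1)) ltac:(lra) ltac:(lra))
    as [_ [Hc [_ Hint]]].
  split.
  - intros u. apply (continuous_ext _ _ _ (fun u => eq_sym (psi_tpow_transform r u))).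
    apply continuous_Rmult; [rcont | apply Hc].
  - apply (is_RInt_Rext _ _ _ _ _ (fun u _ => eq_sym (psi_tpow_transform r u))).
    replace (/ INR (Factorial.fact (S r)) * RInt (fun t => (1 - t) ^ S r * sgnR (chebU (r + 1) t)) (-1) 1)
      with (/ INR (Factorial.fact r) * (/ INR (S r) * tpow_moment r (fun t => sgnR (chebU (r + 1) t)) (-1) 1)).
    + apply is_RInt_Rscal, Hint.
    + unfold tpow_moment. change (Factorial.fact (S r)) with (S r * Factorial.fact r)%nat.
      rewrite mult_INR. field. split; apply not_0_INR; [apply Factorial.fact_neq_0 | lia].
Qed.

Lemma continuous_psi r u : continuous (psi r) u.
Proof. apply psi_spec. Qed.

Lemma phi1_RInt_psi alpha r : phi1 alpha r = (1 / 2) ^ (r + 1) * alpha * RInt (psi r) (-1) 1.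
Proof.
  rewrite (is_RInt_unique _ _ _ _ (proj2 (psi_spec r))). unfold phi1.
  rewrite Nat.add_1_r. unfold Rdiv. ring.
Qed.

Lemma continuous_phi alpha r c d x : continuous (phi alpha r c d) x.
Proof.
  unfold phi. apply continuous_Rmult; [rcont|].
  apply (continuous_Rcomp (fun x => (2 * x - d - c) / (d - c)) (psi r)); [rcont | apply continuous_psi].
Qed.

Lemma is_RInt_affine_unit p q (F : R -> R) : p < q -> (forall x, continuous F x) ->
  is_RInt (fun t => F ((2 * t - q - p) / (q - p))) p q ((q - p) / 2 * RInt F (-1) 1).
Proof.
  intros Hpq HF.
  set (u := 2 / (q - p)). set (v := - (p + q) / (q - p)).
  assert (E1 : u * p + v = -1) by (unfold u, v; field; lra).
  assert (E2 : u * q + v = 1) by (unfold u, v; field; lra).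
  pose proof (is_RInt_continuous F (u * p + v) (u * q + v) HF) as H.
  apply is_RInt_Rcomp_lin, (is_RInt_Rscal _ _ _ ((q - p) / 2)) in H.
  rewrite E1, E2 in H. eapply is_RInt_Rext; [|exact H].
  intros x _. cbv beta. rewrite <- Rmult_assoc.
  replace ((q - p) / 2 * u) with 1 by (unfold u; field; lra).
  replace (u * x + v) with ((2 * x - q - p) / (q - p)) by (unfold u, v; field; lra). ring.
Qed.

Lemma iterInt_piece_phi a b p q alpha r m : a <= p -> p < q -> q <= b ->
  iterInt a (S m) (piece p q (phi alpha r p q)) b
  = (q - p) / 2 * RInt (fun u => (b - (p + q) / 2 - (q - p) / 2 * u) ^ m / INR (Factorial.fact m)
                                * (alpha * ((q - p) / 2) ^ r * psi r u)) (-1) 1.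
Proof.
  intros Hap Hpq Hqb. rewrite iterInt_piece by (auto using continuous_phi; lra).
  apply is_RInt_unique. eapply is_RInt_Rext; [|apply is_RInt_affine_unit; [lra|]].
  - intros t _. cbv beta. unfold phi.
    replace (b - (p + q) / 2 - (q - p) / 2 * ((2 * t - q - p) / (q - p))) with (b - t) by (field; lra).
    ring.
  - intros u. apply continuous_Rmult; [|apply continuous_Rmult; [rcont | apply continuous_psi]]. rcont.
Qed.

Lemma fpiece_piece alpha r a b N i :
  fpiece alpha r a b N i
  = piece (a + INR i * ((b - a) / INR N)) (a + INR (i + 1) * ((b - a) / INR N))
      (phi alpha r (a + INR i * ((b - a) / INR N)) (a + INR (i + 1) * ((b - a) / INR N))).
Proof. reflexivity. Qed.

Lemma sumR_RInt_weights K (c : nat -> R) (w : nat -> R -> R) (g : R -> R) W lo hi :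
  (forall j u, continuous (w j) u) -> (forall u, continuous g u) ->
  (forall u, sumR K (fun j => c j * w j u) = W) ->
  sumR K (fun j => c j * RInt (fun u => w j u * g u) lo hi) = W * RInt g lo hi.
Proof.
  intros Hw Hg Hsum.
  assert (Hint : forall j, is_RInt (fun u => w j u * g u) lo hi (RInt (fun u => w j u * g u) lo hi)).
  { intros j. apply is_RInt_continuous. intros; apply continuous_Rmult; auto. }
  rewrite <- (is_RInt_unique _ _ _ _ (is_RInt_sumR K c _ _ lo hi (fun j _ => Hint j))).
  apply is_RInt_unique, (is_RInt_Rext (fun u => W * g u)).
  - intros u _. rewrite <- (Hsum u), Rmult_comm, <- sumR_scal.
    apply sumR_ext. intros; ring.
  - apply is_RInt_Rscal, is_RInt_continuous, Hg.
Qed.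

Section UniformPartition.
Variables (alpha a b : R) (r k n : nat).
Hypotheses (Hab : a < b) (Hk : (1 <= k)%nat) (Hn : (1 <= n)%nat).

Local Notation hbar := ((b - a) / INR (2 * k * n)).

Lemma hbar_pos : 0 < hbar.
Proof. apply Rdiv_lt_0_compat; [lra | apply lt_0_INR; nia]. Qed.

Lemma hbar_mul : hbar * (2 * INR k * INR n) = b - a.
Proof.
  rewrite !mult_INR. change (INR 2) with 2. field. split; apply not_0_INR; lia.
Qed.

Lemma INR_Xmap_succ j i : (j < k)%nat -> INR (Xmap n k j i + 1) = INR n * (INR k - INR j) + INR i.
Proof.
  intros Hj. unfold Xmap. rewrite <- minus_INR by lia. rewrite <- mult_INR, <- plus_INR.
  f_equal. nia.
Qed.

Lemma Xmap_succ_le j i : (j < k)%nat -> (i < k * n)%nat -> (Xmap n k j i + 1 <= 2 * k * n)%nat.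
Proof. intros Hj Hi. unfold Xmap. nia. Qed.

Lemma iterInt_fpiece_Xmap j i : (j < k)%nat -> (i < k * n)%nat ->
  iterInt a k (fpiece alpha r a b (2 * k * n) (Xmap n k j i)) b
  = hbar / 2 * RInt (fun u =>
      ((b - a) * (1 / 2 + INR j / (2 * INR k) - (INR i - 1 / 2 + u / 2) / (2 * INR k * INR n))) ^ (k - 1)
      / INR (Factorial.fact (k - 1)) * (alpha * (hbar / 2) ^ r * psi r u)) (-1) 1.
Proof.
  intros Hj Hi. rewrite fpiece_piece.
  pose proof hbar_pos as Hh. pose proof (pos_INR (Xmap n k j i)).
  pose proof (INR_Xmap_succ j i Hj) as HX. rewrite plus_INR in HX |- *. change (INR 1) with 1 in *.
  assert (HN : INR (2 * k * n) = 2 * INR k * INR n) by (rewrite !mult_INR; reflexivity).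
  assert (Hq : (INR (Xmap n k j i) + 1) * hbar <= b - a).
  { apply (Rle_trans _ (2 * INR k * INR n * hbar)).
    - apply Rmult_le_compat_r; [lra|]. rewrite <- HN, <- (plus_INR _ 1). apply le_INR, Xmap_succ_le; auto.
    - rewrite Rmult_comm, hbar_mul. lra. }
  replace k with (S (k - 1)) at 1 by lia.
  rewrite iterInt_piece_phi by nra.
  replace (a + (INR (Xmap n k j i) + 1) * hbar - (a + INR (Xmap n k j i) * hbar)) with hbar by ring.
  f_equal. apply RInt_ext_R. intros u. do 3 f_equal.
  replace (INR (Xmap n k j i)) with (INR n * (INR k - INR j) + INR i - 1) by lra.
  rewrite HN. field. split; apply not_0_INR; lia.
Qed.

Lemma iterInt_sumR_fpiece (lambda : nat -> R) j :
  iterInt a k (fun y => sumR (k * n) (fun i => lambda i * fpiece alpha r a b (2 * k * n) (Xmap n k j i) y)) b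
  = sumR (k * n) (fun i => lambda i * iterInt a k (fpiece alpha r a b (2 * k * n) (Xmap n k j i)) b).
Proof.
  pose proof hbar_pos.
  assert (Hp : forall i, a <= a + INR (Xmap n k j i) * hbar) by (intros i; pose proof (pos_INR (Xmap n k j i)); nra).
  assert (Hpq : forall i, a + INR (Xmap n k j i) * hbar <= a + INR (Xmap n k j i + 1) * hbar)
    by (intros i; rewrite plus_INR; change (INR 1) with 1; nra).
  destruct k as [|m]; [lia|].
  apply iterInt_sumR; intros i _ z; rewrite fpiece_piece.
  - apply ex_RInt_piece; auto using continuous_phi.
  - apply continuous_RInt_piece; auto using continuous_phi.
Qed.

Lemma sumR_iterInt_fpiece (c : nat -> R) i :
  (forall x, sumR k (fun j => c j * (1 / 2 + INR j / (2 * INR k) - x) ^ (k - 1)) = 1) ->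
  (i < k * n)%nat ->
  sumR k (fun j => c j * iterInt a k (fpiece alpha r a b (2 * k * n) (Xmap n k j i)) b)
  = hbar / 2 * ((b - a) ^ (k - 1) / INR (Factorial.fact (k - 1)) * (alpha * (hbar / 2) ^ r * RInt (psi r) (-1) 1)).
Proof.
  intros Hc Hi.
  rewrite (sumR_ext k _ (fun j => hbar / 2 * (c j * RInt (fun u =>
      ((b - a) * (1 / 2 + INR j / (2 * INR k) - (INR i - 1 / 2 + u / 2) / (2 * INR k * INR n))) ^ (k - 1)
      / INR (Factorial.fact (k - 1)) * (alpha * (hbar / 2) ^ r * psi r u)) (-1) 1)))
    by (intros j Hj; rewrite iterInt_fpiece_Xmap by auto; ring).
  rewrite sumR_scal, sumR_RInt_weights with (W := (b - a) ^ (k - 1) / INR (Factorial.fact (k - 1))).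
  - f_equal. f_equal. apply is_RInt_unique, is_RInt_Rscal, is_RInt_continuous, continuous_psi.
  - intros j u. rcont.
  - intros u. apply continuous_Rmult; [rcont | apply continuous_psi].
  - intros u. set (x := (INR i - 1 / 2 + u / 2) / (2 * INR k * INR n)).
    transitivity ((b - a) ^ (k - 1) / INR (Factorial.fact (k - 1))
                  * sumR k (fun j => c j * (1 / 2 + INR j / (2 * INR k) - x) ^ (k - 1))).
    + rewrite <- sumR_scal. apply sumR_ext. intros j _. rewrite Rpow_mult_distr. unfold Rdiv. ring.
    + rewrite Hc. ring.
Qed.

Lemma uniform_step_scaling :
  hbar ^ (r + 1) * (b - a) ^ (k - 1)
  = / INR (k * n) ^ r * (b - a) ^ (k + r) * / 2 ^ (r + 1) * / INR (k * n).
Proof.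
  replace ((b - a) ^ (k + r)) with ((b - a) ^ (k - 1) * (b - a) ^ (r + 1)) by (rewrite <- pow_add; f_equal; lia).
  replace (INR (2 * k * n)) with (2 * INR (k * n)) by (rewrite !mult_INR; simpl; ring).
  assert (HK : INR (k * n) <> 0) by (apply not_0_INR; nia).
  unfold Rdiv. rewrite Rpow_mult_distr, pow_inv, Rpow_mult_distr, !pow_add, !pow_1.
  field. repeat split; try apply pow_nonzero; lra.
Qed.

End UniformPartition.

Theorem mainTheorem5 (r k n : nat) (alpha a b : R) (c lambda : nat -> R) :
  (1 <= r)%nat -> (1 <= k)%nat -> (1 <= n)%nat -> a < b ->
  (forall x : R,
      sumR k (fun j => c j * (1 / 2 + INR j / (2 * INR k) - x) ^ (k - 1)) = 1) ->
  let N := (2 * k * n)%nat in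
  let hbar := (b - a) / INR N in
  let I := fun j : nat =>
    iterInt a k
      (fun y => sumR (k * n) (fun i => lambda i * fpiece alpha r a b N (Xmap n k j i) y))
      b in
  sumR k (fun j => c j * I j)
    = hbar ^ (r + 1) * (b - a) ^ (k - 1) * / INR (Factorial.fact (k - 1)) * phi1 alpha r
      * sumR (k * n) lambda
  /\
  hbar ^ (r + 1) * (b - a) ^ (k - 1) * / INR (Factorial.fact (k - 1)) * phi1 alpha r
      * sumR (k * n) lambda
    = / (INR (k * n)) ^ r * (b - a) ^ (k + r) * / 2 ^ (r + 1)
      * (phi1 alpha r / INR (Factorial.fact (k - 1)))
      * (/ INR (k * n) * sumR (k * n) lambda).
Proof.
  intros _ Hk Hn Hab Hc N hbar I. subst N hbar I. split.
  - rewrite (sumR_ext k _ (fun j => c j * sumR (k * n) (fun i =>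
        lambda i * iterInt a k (fpiece alpha r a b (2 * k * n) (Xmap n k j i)) b)))
      by (intros; now rewrite iterInt_sumR_fpiece).
    rewrite sumR_swap.
    rewrite (sumR_ext (k * n) _ (fun i => (b - a) / INR (2 * k * n) / 2
        * ((b - a) ^ (k - 1) / INR (Factorial.fact (k - 1))
           * (alpha * ((b - a) / INR (2 * k * n) / 2) ^ r * RInt (psi r) (-1) 1)) * lambda i))
      by (intros; rewrite sumR_iterInt_fpiece by auto; ring).
    rewrite sumR_scal, phi1_RInt_psi, !pow_add, !pow_1. unfold Rdiv. rewrite !Rpow_mult_distr, pow1. ring.
  - rewrite uniform_step_scaling by auto. unfold Rdiv. ring.
Qed.
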